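(* Let $v=v_1\cdots v_n$ be a word of distinct positive integers avoiding $31425,32415,31524,32514$, with positions of left-to-right maxima $a_1<\dots<a_h$ and of right-to-left maxima $b_1<\dots<b_g$ ($a_1=1$, $a_h=b_1$, $b_g=n$). Assume $h>1$, $g>1$, $a_h>h$ and $v_{a_{h-1}}<v_{b_2}$. Then exactly one of the following holds: (A-1) $a_h=a_{h-1}+1$; (A-2) $a_h>a_{h-1}+1$ and $b_2=a_h+1$; (A-3) $a_h>a_{h-1}+1$, $b_2>a_h+1$, and $v_j>v_{a_{h-1}}$ for all $a_h<j<b_2$.
   Context: A word of distinct positive integers avoids a pattern $P$ (a permutation of $[m]$) if no subsequence of length $m$ is order-isomorphic to $P$. A left-to-right (resp. right-to-left) maximum of $v$ is a letter $v_i$ greater than all letters to its left (resp. right). *)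

From mathcomp Require Import all_boot.
Set Implicit Arguments. Unset Strict Implicit. Unset Printing Implicit Defensive.

(* Words are sequences of naturals; positions are 1-indexed as in the paper:
   letter i of v (1 <= i <= size v) is [nth 0 v i.-1]. *)
Definition letter (v : seq nat) (i : nat) : nat := nth 0 v i.-1.

Definition distinct_pos_word (v : seq nat) : Prop := uniq v /\ all (fun x => 0 < x) v.

Definition order_iso (s P : seq nat) : Prop :=
  size s = size P /\
  forall i j, i < size s -> j < size s -> (nth 0 s i < nth 0 s j) = (nth 0 P i < nth 0 P j).

Definition avoids (v P : seq nat) : Prop :=
  ~ exists s : seq nat, subseq s v /\ order_iso s P.

Definition ltr_max_pos (v : seq nat) : seq nat :=
  [seq i <- iota 1 (size v) | all (fun j => letter v j < letter v i) (iota 1 i.-1)].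

Definition rtl_max_pos (v : seq nat) : seq nat :=
  [seq i <- iota 1 (size v) | all (fun j => letter v j < letter v i) (iota i.+1 (size v - i))].

Definition kth (s : seq nat) (k : nat) : nat := nth 0 s k.-1.

(* The position a_h of the last left-to-right maximum carries the largest
   letter of v, every right-to-left maximum lies at or after it, and all
   letters strictly between a_{h-1} and a_h are smaller than v_{a_{h-1}}.
   The three alternatives are separated by the first two position conditions,
   so only the letter condition of (A-3) needs an argument: if a_{h-1} + 1 < a_h
   and some a_h < j < b_2 had v_j < v_{a_{h-1}}, the letters at positions
   a_{h-1} < a_{h-1} + 1 < a_h < j < b_2 would form 31524 or 32514. *)
From mathcomp Require Import all_boot zify.

Set Implicit Arguments.
Unset Strict Implicit.
Unset Printing Implicit Defensive.

Lemma subseq_nth_sorted (T : eqType) (x0 : T) (s : seq T) (ps : seq nat) :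
  sorted ltn ps -> all (gtn (size s)) ps -> subseq [seq nth x0 s i | i <- ps] s.
Proof.
move=> ps_sorted /allP ps_lt.
rewrite -[X in subseq _ X](mkseq_nth x0); apply: map_subseq.
apply/subseq_uniqP; first exact: iota_uniq.
apply: (irr_sorted_eq ltn_trans ltnn) => //.
  exact/sorted_filter/iota_ltn_sorted/ltn_trans.
move=> i; rewrite mem_filter mem_iota /= add0n.
by case: (boolP (i \in ps)) => // /ps_lt.
Qed.

Lemma sorted_ltn_nth_mono (s : seq nat) : sorted ltn s ->
  {in [pred n | n < size s] &, {mono nth 0 s : i j / i <= j}}.
Proof. by move/(sorted_ltn_nth ltn_trans 0)/leq_mono_in. Qed.

Lemma order_iso_31524_32514 (c p d q e : nat) :
  p < c -> q < c -> c < e -> e < d -> p != q ->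
  order_iso [:: c; p; d; q; e]
            (if p < q then [:: 3; 1; 5; 2; 4] else [:: 3; 2; 5; 1; 4]).
Proof.
move=> *; case: ifP => pq; split=> //
  [] [|[|[|[|[|i]]]]] [|[|[|[|[|j]]]]] //= _ _; lia.
Qed.

Section Maxima.

Variable v : seq nat.

Local Notation a := (ltr_max_pos v).
Local Notation b := (rtl_max_pos v).

Lemma ltr_max_posP k :
  reflect (0 < k <= size v /\ forall j, 0 < j < k -> letter v j < letter v k)
          (k \in a).
Proof.
rewrite mem_filter mem_iota; apply: (iffP andP) => [[/allP lt_k k_rng]|[k_rng lt_k]].
  by split=> [|j j_rng]; [lia | apply: lt_k; rewrite mem_iota; lia].
by split; [apply/allP => j; rewrite mem_iota => j_rng; apply: lt_k; lia | lia].
Qed.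

Lemma rtl_max_posP k :
  reflect (0 < k <= size v /\ forall j, k < j <= size v -> letter v j < letter v k)
          (k \in b).
Proof.
rewrite mem_filter mem_iota; apply: (iffP andP) => [[/allP lt_k k_rng]|[k_rng lt_k]].
  by split=> [|j j_rng]; [lia | apply: lt_k; rewrite mem_iota; lia].
by split; [apply/allP => j; rewrite mem_iota => j_rng; apply: lt_k; lia | lia].
Qed.

Lemma ltr_max_pos_sorted : sorted ltn a.
Proof. exact/sorted_filter/iota_ltn_sorted/ltn_trans. Qed.

Lemma rtl_max_pos_sorted : sorted ltn b.
Proof. exact/sorted_filter/iota_ltn_sorted/ltn_trans. Qed.

Lemma exists_ltr_max_ge i : 0 < i <= size v ->
  exists2 k, k \in a & k <= i /\ letter v i <= letter v k.
Proof.
elim: i {-2}i (leqnn i) => [|n IHn] i le_in i_rng; first lia.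
have [i_max | i_nmax] := boolP (i \in a); first by exists i.
have [j j_rng le_ij] : exists2 j, 0 < j < i & letter v i <= letter v j.
  move: i_nmax; rewrite mem_filter mem_iota andbC (_ : 1 <= i < 1 + size v) //=.
  by case/allPn => j; rewrite mem_iota -leqNgt => j_rng; exists j => //; lia.
have [||k ka [le_kj le_jk]] := IHn j; [lia | lia |].
by exists k => //; split; [lia | exact: leq_trans le_ij le_jk].
Qed.

Lemma letter_ltr_max_pos_mono k k' : k \in a -> k' \in a -> k <= k' ->
  letter v k <= letter v k'.
Proof.
move=> /ltr_max_posP[k_rng _] /ltr_max_posP[k'_rng lt_k'].
rewrite leq_eqVlt => /orP[/eqP-> // | lt_kk'].
by apply/ltnW/lt_k'; lia.
Qed.

Lemma ltr_max_le_last k : k \in a -> k <= last 0 a.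
Proof.
move=> ka; have lt_k_size : index k a < size a by rewrite index_mem.
have a_gt0 : 0 < size a := leq_ltn_trans (leq0n _) lt_k_size.
rewrite -nth_last -{1}(nth_index 0 ka).
rewrite (sorted_ltn_nth_mono ltr_max_pos_sorted) ?inE ?prednK //.
by rewrite -ltnS prednK.
Qed.

Lemma last_ltr_max_pos_mem : 0 < size v -> last 0 a \in a.
Proof.
move=> v_gt0; have [|k ka _] := @exists_ltr_max_ge 1; first lia.
by case: (ltr_max_pos v) ka => // x s _; exact: mem_last.
Qed.

Hypothesis v_uniq : uniq v.

Lemma eq_letter p q : 0 < p <= size v -> 0 < q <= size v ->
  (letter v p == letter v q) = (p == q).
Proof.
move=> /andP[p_pos p_le] /andP[q_pos q_le].
by rewrite /letter nth_uniq ?prednK //; lia.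
Qed.

Lemma letter_lt_ltr_max k i : k \in a -> 0 < i <= size v -> i != k ->
  (forall k', k' \in a -> k' <= i -> k' <= k) -> letter v i < letter v k.
Proof.
move=> ka i_rng ne_ik below_k.
have [k' k'a [le_k'i le_ik']] := exists_ltr_max_ge i_rng.
have /ltr_max_posP[k_rng _] := ka.
rewrite ltn_neqAle eq_letter // ne_ik /=.
exact: leq_trans le_ik' (letter_ltr_max_pos_mono k'a ka (below_k _ k'a le_k'i)).
Qed.

Lemma letter_lt_last_ltr_max p : 0 < p <= size v -> p != last 0 a ->
  letter v p < letter v (last 0 a).
Proof.
move=> p_rng ne_p; apply: letter_lt_ltr_max => //.
  by apply: last_ltr_max_pos_mem; lia.
by move=> k ka _; exact: ltr_max_le_last.
Qed.

Lemma letter_lt_between_ltr_max n i : nth 0 a n < i < nth 0 a n.+1 ->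
  letter v i < letter v (nth 0 a n).
Proof.
move=> /andP[lt_ni lt_in1].
have lt_n1 : n.+1 < size a.
  by rewrite ltnNge; apply: contraTN lt_in1 => /(nth_default 0) ->.
have /ltr_max_posP[n1_rng _] : nth 0 a n.+1 \in a by exact: mem_nth.
have na : nth 0 a n \in a by apply/mem_nth/ltnW.
apply: letter_lt_ltr_max => //; [lia | lia |] => k ka le_ki.
have lt_k_size : index k a < size a by rewrite index_mem.
have mono := sorted_ltn_nth_mono ltr_max_pos_sorted.
have : k < nth 0 a n.+1 by lia.
rewrite -{1}(nth_index 0 ka) (leqW_mono_in mono) ?inE // ltnS => le_k_n.
by rewrite -(nth_index 0 ka) mono ?inE // ltnW.
Qed.

Lemma last_ltr_max_le_rtl_max k : k \in b -> last 0 a <= k.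
Proof.
move=> /rtl_max_posP[k_rng gt_k]; rewrite leqNgt; apply/negP => lt_k_last.
have /ltr_max_posP[last_rng _] : last 0 a \in a by apply: last_ltr_max_pos_mem; lia.
have := gt_k (last 0 a); have := letter_lt_last_ltr_max k_rng; lia.
Qed.

Lemma avoids_31524_32514_letter_lt p1 p2 p3 p4 p5 :
  avoids v [:: 3; 1; 5; 2; 4] -> avoids v [:: 3; 2; 5; 1; 4] ->
  0 < p1 < p2 -> p2 < p3 < p4 -> p4 < p5 <= size v ->
  letter v p2 < letter v p1 < letter v p5 -> letter v p5 < letter v p3 ->
  letter v p1 < letter v p4.
Proof.
move=> avoid1 avoid2 p12 p34 p5_le /andP[lt21 lt15] lt53.
rewrite ltnNge; apply/negP => le41.
have lt41 : letter v p4 < letter v p1 by rewrite ltn_neqAle le41 andbT eq_letter //; lia.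
have ne24 : letter v p2 != letter v p4 by rewrite eq_letter //; lia.
have sub : subseq [:: letter v p1; letter v p2; letter v p3; letter v p4; letter v p5] v.
  by apply: (@subseq_nth_sorted _ 0 v [:: p1.-1; p2.-1; p3.-1; p4.-1; p5.-1]) => /=; lia.
move: (order_iso_31524_32514 lt21 lt41 lt15 lt53 ne24).
by case: ifP => _ iso; [apply: avoid1 | apply: avoid2]; exists
  [:: letter v p1; letter v p2; letter v p3; letter v p4; letter v p5].
Qed.

End Maxima.

Theorem lemma3p9 (v : seq nat) :
  distinct_pos_word v ->
  avoids v [:: 3; 1; 4; 2; 5] -> avoids v [:: 3; 2; 4; 1; 5] ->
  avoids v [:: 3; 1; 5; 2; 4] -> avoids v [:: 3; 2; 5; 1; 4] ->
  let a := ltr_max_pos v in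
  let b := rtl_max_pos v in
  let h := size a in
  let g := size b in
  1 < h -> 1 < g -> h < kth a h ->
  letter v (kth a h.-1) < letter v (kth b 2) ->
  let A1 := kth a h = (kth a h.-1).+1 in
  let A2 := (kth a h.-1).+1 < kth a h /\ kth b 2 = (kth a h).+1 in
  let A3 := [/\ (kth a h.-1).+1 < kth a h, (kth a h).+1 < kth b 2 &
                forall j, kth a h < j < kth b 2 -> letter v (kth a h.-1) < letter v j] in
  (A1 /\ ~ A2 /\ ~ A3) \/ (~ A1 /\ A2 /\ ~ A3) \/ (~ A1 /\ ~ A2 /\ A3).
Proof.
move=> [v_uniq _] _ _ avoid1 avoid2 a b h g; rewrite {}/h {}/g.
move=> h_gt1 g_gt1 _ lt_a'_b2.
have [n size_a] : exists n, size a = n.+2 by exists (size a).-2; lia.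
rewrite /kth size_a /= in lt_a'_b2 *.
set a' := nth 0 a n in lt_a'_b2 *; set ah := nth 0 a n.+1; set b2 := nth 0 b 1 in lt_a'_b2 *.
have ah_last : ah = last 0 a by rewrite -nth_last size_a.
have /ltr_max_posP[a'_rng _] : a' \in a by rewrite mem_nth // size_a.
have lt_a'_ah : a' < ah.
  by apply: (sorted_ltn_nth ltn_trans 0 (ltr_max_pos_sorted v)); rewrite ?inE ?size_a.
have b1b : nth 0 b 0 \in b by apply/mem_nth/ltnW.
have lt_b1_b2 : nth 0 b 0 < b2.
  by apply: (sorted_ltn_nth ltn_trans 0 (rtl_max_pos_sorted v)); rewrite ?inE // ltnW.
have lt_ah_b2 : ah < b2.
  by rewrite ah_last (leq_ltn_trans (last_ltr_max_le_rtl_max v_uniq b1b) lt_b1_b2).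
have /rtl_max_posP[b2_rng _] : b2 \in b by rewrite mem_nth.
have lt_b2_ah : letter v b2 < letter v ah.
  by rewrite ah_last letter_lt_last_ltr_max // -ah_last; lia.
have [ah_eq | ah_neq] := eqVneq ah a'.+1.
  by left; split=> //; split; case; lia.
have [b2_eq | b2_neq] := eqVneq b2 ah.+1.
  by right; left; split; [lia | split; [lia | case; lia]].
right; right; split; [lia | split; [by case; lia | split; [lia | lia |]]].
move=> j /andP[lt_ah_j lt_j_b2].
apply: (@avoids_31524_32514_letter_lt v v_uniq a' a'.+1 ah j b2) => //; try lia.
by rewrite lt_a'_b2 andbT letter_lt_between_ltr_max // -/a -/a' -/ah; lia.
Qed.
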